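(* In Setting (S), for every $0\le i\le \ell$, $|V(G_i)|\ge n\left(1-\frac{i}{2\log n}\right)$.
   Context: Median graph: every triple $x,y,z$ of vertices has $|I(x,y)\cap I(y,z)\cap I(z,x)|=1$, $I(u,v)=\{x:d(u,x)+d(x,v)=d(u,v)\}$. $\Theta$-classes: classes of the reflexive–transitive closure of the relation on edges ''opposite edges of a 4-cycle''; deleting a $\Theta$-class $E_i$ of a median graph leaves two components with vertex sets (halfspaces) $H_i',H_i''$. For $u\ne v$, the ladder set $L_{u,v}$ is the set of $\Theta$-classes separating $u$ from $v$ that contain an edge incident to $u$. Setting (S): $(G,\omega)$ is a median graph with $n\ge 3$ vertices and weights $\omega:V(G)\to\mathbb{N}$ such that every $\Theta$-class satisfies $\min\{|H_i'|,|H_i''|\}<n/(2\log n)$ ($\log$ natural); $H_i'$ denotes the smaller (minority) and $H_i''$ the larger halfspace. $v_0$ is the unique vertex in all majority halfspaces; $u_{\max}$ maximizes $d(v_0,u)+\omega(u)$ (chosen $=v_0$ if possible) and $u_{\max}\ne v_0$ is assumed. $L(G)=L_{v_0,u_{\max}}=\{E_1,\dots,E_\ell\}$. Large sets: $G_0=G$, $G_{i+1}=G[V(G_i)\setminus H'_{i+1}]$. *)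

From Stdlib Require Import Reals.
From mathcomp Require Import all_boot.

Set Implicit Arguments.
Unset Strict Implicit.
Unset Printing Implicit Defensive.

Section MedianDefs.
Variables (T : finType) (e : rel T).

Definition simple_graph : Prop := symmetric e /\ irreflexive e.
Definition connected_graph : Prop := forall u v : T, connect e u v.

Definition walk (u v : T) (k : nat) : bool :=
  [exists p : k.-tuple T, path e u p && (last u p == v)].

(* graph distance: least k with a walk of length k (all distances are < #|T|
   in a connected graph) *)
Definition gdist (u v : T) : nat := find (walk u v) (iota 0 #|T|).

Definition interval (u v : T) : {set T} :=
  [set x | gdist u x + gdist x v == gdist u v].

Definition median_graph : Prop :=
  [/\ simple_graph, connected_graph &
      forall x y z : T,
        #|interval x y :&: interval y z :&: interval z x| = 1].

Definition is_edge (f : {set T}) : bool :=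
  [exists x, exists y, e x y && (f == [set x; y])].

(* f and g are opposite edges of a 4-cycle a-b-d-c-a *)
Definition opp4 (f g : {set T}) : bool :=
  [exists a, exists b, exists c, exists d,
    [&& f == [set a; b], g == [set c; d], e a b, e c d, e a c, e b d,
        a != d & b != c]].

Definition theta_class_of (f : {set T}) : {set {set T}} :=
  [set g | is_edge g && connect opp4 f g].

Definition is_theta_class (C : {set {set T}}) : Prop :=
  exists2 f, is_edge f & C = theta_class_of f.

Definition del (C : {set {set T}}) : rel T :=
  fun x y => e x y && ([set x; y] \notin C).

Definition comp (C : {set {set T}}) (x : T) : {set T} :=
  [set z | connect (del C) x z].

(* minority / majority halfspace: the smallest / largest component of G - C
   (x0 is just a default vertex for arg min/max) *)
Definition minority (x0 : T) (C : {set {set T}}) : {set T} :=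
  comp C [arg min_(x < x0) #|comp C x|].
Definition majority (x0 : T) (C : {set {set T}}) : {set T} :=
  comp C [arg max_(x > x0) #|comp C x|].

Definition separates (C : {set {set T}}) (u v : T) : bool :=
  ~~ connect (del C) u v.

Definition in_ladder (C : {set {set T}}) (u v : T) : Prop :=
  [/\ is_theta_class C, separates C u v & [exists f in C, u \in f]].

(* vertex set of G_i for the enumeration s = [E_1; ...; E_l] *)
Definition large_set (x0 : T) (s : seq {set {set T}}) (i : nat) : {set T} :=
  [set x | all (fun C => x \notin minority x0 C) (take i s)].

End MedianDefs.

(* Removing the minority halfspaces of the first i ladder classes deletes at
   most i of them, each of size below n / (2 ln n); a union bound gives
   |V(G_i)| >= n - i n / (2 ln n).  None of the median-graph structure is
   needed beyond this size bound on minority halfspaces. *)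

From Stdlib Require Import Reals Lra.
From mathcomp Require Import all_boot zify.

Lemma card_avoiding_ge (T : finType) (I : Type) (M : I -> {set T}) (l : seq I) :
  #|T| <= #|[set x | all (fun C => x \notin M C) l]| + \sum_(C <- l) #|M C|.
Proof.
elim: l => [|C l IH].
  rewrite big_nil addn0 -cardsT; apply: subset_leq_card.
  by apply/subsetP=> x _; rewrite inE.
set A := [set x | all _ l] in IH.
have -> : [set x | all (fun C => x \notin M C) (C :: l)] = A :\: M C.
  by apply/setP=> x; rewrite /A !inE.
have splitA := cardsID (M C) A.
have capA : #|A :&: M C| <= #|M C| by apply/subset_leq_card/subsetIr.
rewrite big_cons; lia.
Qed.

Lemma INR_sum_le_size_mul (I : eqType) (f : I -> nat) (m : R) (l : seq I) :
  (forall C, C \in l -> Rle (INR (f C)) m) ->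
  Rle (INR (\sum_(C <- l) f C)) (INR (size l) * m).
Proof.
elim: l => [|C l IH] fl_le; first by rewrite big_nil /=; lra.
have fC_le := fl_le C (mem_head _ _).
have sum_le : Rle (INR (\sum_(D <- l) f D)) (INR (size l) * m).
  by apply: IH => D lD; apply: fl_le; rewrite in_cons lD orbT.
rewrite big_cons plus_INR (S_INR (size l)); lra.
Qed.

Lemma ln_INR_gt0 {n : nat} : 1 < n -> Rlt 0 (ln (INR n)).
Proof.
move=> /ltP/lt_1_INR n_gt1; rewrite -ln_1; apply: ln_increasing; lra.
Qed.

Lemma card_large_set_ge (T : finType) (e : rel T) (x0 : T)
    (s : seq {set {set T}}) (m : R) (i : nat) :
  (forall C, C \in s -> Rle (INR #|minority e x0 C|) m) ->
  i <= size s ->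
  Rle (INR #|T| - INR i * m) (INR #|large_set e x0 s i|).
Proof.
move=> minority_le le_i_s.
have size_take_i : size (take i s) = i by rewrite size_take_min; lia.
have sum_le : Rle (INR (\sum_(C <- take i s) #|minority e x0 C|)) (INR i * m).
  rewrite -[in INR i]size_take_i; apply: INR_sum_le_size_mul => C iC.
  exact: minority_le (mem_take iC).
have card_le : Rle (INR #|T|) (INR #|large_set e x0 s i|
                    + INR (\sum_(C <- take i s) #|minority e x0 C|)).
  by rewrite -plus_INR; apply/le_INR/leP/card_avoiding_ge.
lra.
Qed.

Theorem mainTheorem9 (T : finType) (e : rel T) (w : T -> nat)
    (x0 v0 umax : T) (s : seq {set {set T}}) :
  median_graph e ->
  3 <= #|T| ->
  (* Setting (S): minority halfspaces are small *)
  (forall C, is_theta_class e C ->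
     Rlt (INR #|minority e x0 C|) (Rdiv (INR #|T|) (Rmult 2 (ln (INR #|T|))))) ->
  (* v0 lies in all majority halfspaces *)
  (forall C, is_theta_class e C -> v0 \in majority e x0 C) ->
  (* u_max maximizes d(v0,u) + w(u), and v0 is not a maximizer *)
  (forall u, gdist e v0 u + w u <= gdist e v0 umax + w umax) ->
  gdist e v0 v0 + w v0 < gdist e v0 umax + w umax ->
  umax != v0 ->
  (* s = [E_1; ...; E_l] enumerates L(G) = L_{v0,umax} *)
  uniq s ->
  (forall C, C \in s <-> in_ladder e C v0 umax) ->
  forall i, i <= size s ->
    Rle (Rmult (INR #|T|) (Rminus 1 (Rdiv (INR i) (Rmult 2 (ln (INR #|T|))))))
        (INR #|large_set e x0 s i|).
Proof.
move=> _ n_ge3 minority_lt _ _ _ _ _ s_ladder i le_i_s.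
have ln_n_gt0 := ln_INR_gt0 (ltnW n_ge3).
set m := Rdiv (INR #|T|) (Rmult 2 (ln (INR #|T|))).
have -> : Rmult (INR #|T|) (Rminus 1 (Rdiv (INR i) (Rmult 2 (ln (INR #|T|))))) =
          Rminus (INR #|T|) (Rmult (INR i) m) by rewrite /m; field; lra.
apply: card_large_set_ge => // C /s_ladder [theta_C _ _].
exact/Rlt_le/minority_lt.
Qed.
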